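(* Let $q=2^r$ ($r$ a positive integer), $N=q(q^2-1)$, and let $\{C_i\}_{i=0}^N$ be the weight distribution of the code $C(SL(2,q))$. Then for $0\le i\le N$, \[ C_i=\sum\binom{q^2}{\nu_0}\prod_{tr(\beta^{-1})=0}\binom{q^2+q}{\nu_\beta}\prod_{tr(\beta^{-1})=1}\binom{q^2-q}{\nu_\beta}, \] where the sum runs over all families of nonnegative integers $\{\nu_\beta\}_{\beta\in\mathbb{F}_q}$ with $\sum_\beta\nu_\beta=i$ and $\sum_\beta\nu_\beta\beta=0$ in $\mathbb{F}_q$, and the first and second products run over $\beta\in\mathbb{F}_q^*$ with $tr(\beta^{-1})=0$, respectively $tr(\beta^{-1})=1$.
   Context: $tr:\mathbb{F}_q\to\mathbb{F}_2$ is the absolute trace. $Tr$ is the matrix trace; for a fixed ordering $g_1,\dots,g_N$ of $SL(2,q)$ and $v=(Tr(g_1),\dots,Tr(g_N))\in\mathbb{F}_q^N$, $C(SL(2,q))=\{u\in\mathbb{F}_2^N:u\cdot v=0\}$ (dot product in $\mathbb{F}_q$). $C_i$ is the number of codewords of Hamming weight $i$. Convention: $\binom{b}{a}=0$ if $b<a$. *)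

From HB Require Import structures.
From mathcomp Require Import all_boot all_order all_algebra all_field.
Set Implicit Arguments. Unset Strict Implicit. Unset Printing Implicit Defensive.
Import GRing.Theory.
Local Open Scope ring_scope.

Definition SL2 (F : finFieldType) := {A : 'M[F]_2 | \det A == 1}.

(* Absolute trace F_{2^r} -> F_2, valued in the prime subfield {0,1} of F. *)
Definition abs_trace (F : finFieldType) (r : nat) (x : F) : F :=
  \sum_(k < r) x ^+ (2 ^ k).

(* The code C(SL(2,q)): binary words u indexed by SL(2,F) (F_2 = bool) with
   sum_g u_g * Tr(g) = 0 in F. *)
Definition CSL (F : finFieldType) : {set {ffun SL2 F -> bool}} :=
  [set u : {ffun SL2 F -> bool} | \sum_(g : SL2 F) ((u g : nat)%:R * \tr (val g)) == 0].

Definition hweight (F : finFieldType) (u : {ffun SL2 F -> bool}) : nat :=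
  #|[set g | u g]|.

Definition weight_count (F : finFieldType) (i : nat) : nat :=
  #|[set u in CSL F | hweight u == i]|.

(* A word is determined by the sets of its ones in the trace classes
   T_b = {g in SL(2,q) | Tr g = b}; it has weight i and lies in the code iff its
   profile n_b = #(ones in T_b) satisfies sum_b n_b = i and sum_b n_b b = 0.
   Hence C_i is the sum over such profiles of prod_b C(#T_b, n_b).  Writing the
   elements of T_b as [[a, x], [y, b - a]] with a (b - a) - x y = 1 gives
   #T_b = q (q - 1) + q #{a | a (b - a) = 1}.  In characteristic 2 this equation
   has the single root a = 1 when b = 0, and for b <> 0 the substitution a = b z
   turns it into z^2 + z = b^-2, which has two roots or none according as
   tr(b^-1) = tr(b^-2) is 0 or 1 (the Artin-Schreier map z |-> z^2 + z is
   2-to-1 onto the kernel of the trace). *)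

From HB Require Import structures.
From mathcomp Require Import all_boot all_order all_algebra all_field.
From mathcomp Require Import ring zify.
Set Implicit Arguments. Unset Strict Implicit. Unset Printing Implicit Defensive.
Import GRing.Theory.
Local Open Scope ring_scope.

Section FibreCounts.
Local Open Scope nat_scope.
Variables (T B : finType) (f : T -> B).

Definition fibre_count (u : {ffun T -> bool}) (b : B) : nat :=
  #|[set x | u x & f x == b]|.

Lemma card_words_fibre_counts (k : B -> nat) :
  #|[set u : {ffun T -> bool} | [forall b, fibre_count u b == k b]]| =
  \prod_b 'C(#|[set x | f x == b]|, k b).
Proof.
pose support_by_fibre (u : {ffun T -> bool}) : {ffun B -> {set T}} :=
  [ffun b => [set x | u x & f x == b]].
have support_by_fibre_inj : injective support_by_fibre.
  move=> u v /ffunP /(_ (f _)) uv; apply/ffunP => x.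
  by move: (uv x); rewrite !ffunE => /setP /(_ x); rewrite !inE eqxx !andbT.
rewrite -(card_imset _ support_by_fibre_inj).
pose draws b := [set A : {set T} | A \subset [set x | f x == b] & #|A| == k b].
have -> : support_by_fibre @: [set u | [forall b, fibre_count u b == k b]] =
          [set S | S \in family draws].
  apply/setP => S; rewrite inE; apply/imsetP/familyP.
    move=> [u]; rewrite inE => /forallP cnt_u -> b; rewrite ffunE inE cnt_u andbT.
    by apply/subsetP => x; rewrite !inE => /andP[_ ->].
  move=> S_draws.
  have S_fibre b : [set x | x \in S (f x) & f x == b] = S b.
    have := S_draws b; rewrite inE => /andP[/subsetP Sb _].
    apply/setP => x; rewrite inE; apply/andP/idP => [[Sx /eqP <-] // | Sx].
    by have := Sb x Sx; rewrite inE => /eqP fx; rewrite fx Sx.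
  exists [ffun x => x \in S (f x)].
    rewrite inE; apply/forallP => b; rewrite /fibre_count.
    have := S_draws b; rewrite inE => /andP[_ /eqP <-].
    by rewrite -[in #|S b|]S_fibre; apply/eqP/eq_card => x; rewrite !inE ffunE.
  by apply/ffunP => b; rewrite ffunE -S_fibre; apply/setP => x; rewrite !inE ffunE.
rewrite cardsE card_family foldrE big_map big_enum /=.
by apply: eq_bigr => b _; rewrite /draws cards_draws cardsE.
Qed.

Lemma card_words_by_fibre_counts (i : nat) (P : (B -> nat) -> bool) :
  (forall nu, P nu -> \sum_b nu b = i) ->
  (forall nu1 nu2, nu1 =1 nu2 -> P nu1 = P nu2) ->
  #|[set u : {ffun T -> bool} | P (fibre_count u)]| =
  \sum_(nu : {ffun B -> 'I_i.+1} | P (fun b => nu b : nat))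
     \prod_b 'C(#|[set x | f x == b]|, nu b).
Proof.
move=> P_sum P_ext.
have count_le u b : P (fibre_count u) -> fibre_count u b <= i.
  by move=> /P_sum <-; rewrite (bigD1 b) //= leq_addr.
pose profile u : {ffun B -> 'I_i.+1} := [ffun b => inord (fibre_count u b)].
rewrite -sum1_card (partition_big profile (fun nu : {ffun B -> 'I_i.+1} => P (fun b => nu b : nat))).
  apply: eq_bigr => nu P_nu; rewrite -card_words_fibre_counts -sum1_card.
  apply: eq_bigl => u; rewrite !inE; apply/andP/forallP.
    by move=> [P_u /eqP <-] b; rewrite ffunE inordK // ltnS count_le.
  move=> cnt_u; have nu_u : fibre_count u =1 (fun b => nu b : nat) by move=> b; apply/eqP.
  rewrite (P_ext _ _ nu_u) P_nu; split => //; apply/eqP/ffunP => b.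
  by rewrite ffunE; apply/val_inj; rewrite /= nu_u inordK.
move=> u; rewrite inE => P_u; rewrite (P_ext _ (fibre_count u)) // => b.
by rewrite ffunE inordK // ltnS count_le.
Qed.

End FibreCounts.

Lemma card_pair_slices (A B : finType) (P : pred (A * B)) :
  #|[set x | P x]| = (\sum_a #|[set b | P (a, b)]|)%N.
Proof.
rewrite -sum1dep_card (eq_bigr _ (fun a _ => esym (sum1dep_card _))).
rewrite (pair_big_dep xpredT (fun a b => P (a, b)) (fun _ _ => 1%N)) /=.
by apply: eq_bigl => -[].
Qed.

Section SL2TraceClasses.
Variables (F : finFieldType) (t : F).

Definition trace_mx (x : F * F * F) : 'M[F]_2 :=
  \matrix_(i < 2, j < 2)
    if i == 0 :> nat then (if j == 0 :> nat then x.1.1 else x.1.2)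
    else (if j == 0 :> nat then x.2 else t - x.1.1).

Lemma det_trace_mx x : \det (trace_mx x) = x.1.1 * (t - x.1.1) - x.1.2 * x.2.
Proof.
rewrite (expand_det_row _ ord0) !big_ord_recl big_ord0 /cofactor !det_mx11 !mxE /=.
by rewrite /bump /=; ring.
Qed.

Lemma mxtrace_trace_mx x : \tr (trace_mx x) = t.
Proof. by rewrite /mxtrace !big_ord_recl big_ord0 !mxE /=; ring. Qed.

Definition trace_mx_entries (A : 'M[F]_2) : F * F * F :=
  (A ord0 ord0, A ord0 ord_max, A ord_max ord0).

Lemma trace_mxK (A : 'M[F]_2) : \tr A = t -> trace_mx (trace_mx_entries A) = A.
Proof.
rewrite /mxtrace !big_ord_recl big_ord0 addr0 => trA.
apply/matrixP => i j; rewrite mxE.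
case: i => [[|[|//]] lti]; case: j => [[|[|//]] ltj] /=;
  try by congr (A _ _); apply: val_inj.
by rewrite -trA addrC addrK; congr (A _ _); apply: val_inj.
Qed.

Lemma card_SL2_trace_triples :
  #|[set g : SL2 F | \tr (val g) == t]| =
  #|[set x : F * F * F | x.1.1 * (t - x.1.1) - x.1.2 * x.2 == 1]|.
Proof.
rewrite -(card_in_imset (f := trace_mx_entries \o val)); last first.
  move=> g1 g2; rewrite !inE => /eqP tr1 /eqP tr2 /= eq12; apply: val_inj.
  by rewrite -(trace_mxK tr1) -(trace_mxK tr2) eq12.
apply: eq_card => x; rewrite inE; apply/imsetP/idP.
  move=> [g]; rewrite inE => /eqP trg ->.
  by rewrite -det_trace_mx /= trace_mxK //; apply: (valP g).
move=> det_x; have det1 : \det (trace_mx x) == 1 by rewrite det_trace_mx.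
exists (exist _ (trace_mx x) det1); first by rewrite inE /= mxtrace_trace_mx.
by case: x det_x det1 => [[a b] c] _ ?; rewrite /trace_mx_entries /= !mxE.
Qed.

Lemma card_mul_eq_sub1 (e : F) :
  (\sum_b #|[set c : F | (e - b * c == 1)%R]|)%N = (#|F|.-1 + #|F| * (e == 1%R))%N.
Proof.
rewrite (bigD1 0) //= addnC; congr (_ + _)%N.
  rewrite (eq_bigr (fun _ => 1%N)) => [|b b_neq0].
    by rewrite sum1dep_card -(cardC1 (0 : F)); apply: eq_card => b; rewrite !inE.
  rewrite -(cards1 (b^-1 * (e - 1))); apply: eq_card => c; rewrite !inE.
  apply/eqP/eqP => [bc | ->]; last by rewrite mulVKf //; ring.
  by apply: (mulfI b_neq0); rewrite mulVKf // -bc; ring.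
have -> : [set c : F | e - 0 * c == 1] = if e == 1 then setT else set0.
  by apply/setP => c; rewrite inE mul0r subr0; case: (e == 1); rewrite inE.
by case: (e == 1); rewrite ?cardsT ?cards0 ?muln1 ?muln0.
Qed.

Lemma card_SL2_trace :
  #|[set g : SL2 F | \tr (val g) == t]| =
  (#|F| * #|F|.-1 + #|F| * #|[set a : F | (a * (t - a) == 1)%R]|)%N.
Proof.
rewrite card_SL2_trace_triples card_pair_slices.
rewrite -(pair_bigA _ (fun a b => #|[set c : F | a * (t - a) - b * c == 1]|)) /=.
rewrite -sum1dep_card big_distrr /= -sum_nat_const.
rewrite [X in (_ + X)%N]big_mkcond -big_split /=.
by apply: eq_bigr => a _; rewrite card_mul_eq_sub1; case: ifP; rewrite ?muln1 ?muln0.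
Qed.

End SL2TraceClasses.

Section AbsoluteTrace.
Variables (F : finFieldType) (r : nat).
Hypothesis cardF : #|F| = (2 ^ r)%N.

Lemma char2_of_card : (2 \in [pchar F])%N.
Proof. exact: (card_finPcharP cardF). Qed.

Lemma exponent_gt0 : (0 < r)%N.
Proof. by have := finNzRing_gt1 F; rewrite cardF; case: r. Qed.

Lemma exprD_pow2 (x y : F) k : (x + y) ^+ (2 ^ k) = x ^+ (2 ^ k) + y ^+ (2 ^ k).
Proof. by apply: exprDn_pchar; rewrite pnatX (pnatE _ (isT : prime 2)) char2_of_card. Qed.

Lemma abs_traceD (x y : F) : abs_trace r (x + y) = abs_trace r x + abs_trace r y.
Proof. by rewrite /abs_trace -big_split; apply: eq_bigr => k _; rewrite exprD_pow2. Qed.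

Lemma abs_trace_sqr (x : F) : abs_trace r (x ^+ 2) = abs_trace r x.
Proof.
rewrite /abs_trace; case: r cardF exponent_gt0 => // r' cardF' _.
rewrite [LHS]big_ord_recr [RHS]big_ord_recl /= addrC; congr (_ + _).
  by rewrite -exprM -expnS -cardF' expf_card expn0 expr1.
by apply: eq_bigr => k _; rewrite -exprM -expnS.
Qed.

Lemma sqr_abs_trace (x : F) : abs_trace r x ^+ 2 = abs_trace r x.
Proof.
rewrite -[LHS](pFrobenius_autE char2_of_card) rmorph_sum -[RHS]abs_trace_sqr.
by apply: eq_bigr => k _; rewrite /= pFrobenius_autE -!exprM mulnC.
Qed.

Lemma abs_trace01 (x : F) : (abs_trace r x == 0) || (abs_trace r x == 1).
Proof.
have : abs_trace r x * (abs_trace r x - 1) == 0.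
  by rewrite mulrBr mulr1 -expr2 sqr_abs_trace subrr.
by rewrite mulf_eq0 subr_eq0.
Qed.

(* [abs_trace r] is evaluation of [\sum_(k < r) 'X^(2^k)], a nonzero polynomial of degree [2^(r-1)]. *)
Lemma card_abs_trace_ker_le : (#|[set c : F | abs_trace r c == 0%R]| <= 2 ^ r.-1)%N.
Proof.
pose p : {poly F} := \sum_(k < r) 'X^(2 ^ k).
have p_eval c : p.[c] = abs_trace r c.
  by rewrite horner_sum; apply: eq_bigr => k _; rewrite hornerXn.
have size_p : size p = (2 ^ r.-1).+1.
  rewrite /p; case: r exponent_gt0 => // r' _ /=.
  rewrite big_ord_recr /= addrC size_polyDl size_polyXn // ltnS.
  apply: leq_trans (size_sum _ _ _) _; apply/bigmax_leqP => k _.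
  by rewrite size_polyXn ltn_exp2l.
have p_neq0 : p != 0 by rewrite -size_poly_eq0 size_p.
have := max_poly_roots p_neq0 (rs := enum [set c | abs_trace r c == 0]) _ (enum_uniq _).
rewrite -cardE size_p ltnS; apply.
by apply/allP => c; rewrite mem_enum inE => /eqP tr_c; rewrite /root p_eval tr_c.
Qed.

Definition artin_schreier (y : F) : F := y ^+ 2 + y.

Lemma abs_trace_artin_schreier y : abs_trace r (artin_schreier y) = 0.
Proof. by rewrite abs_traceD abs_trace_sqr addrr_pchar2 // char2_of_card. Qed.

Lemma artin_schreier_eq y z :
  (artin_schreier y == artin_schreier z) = (y == z) || (y == z + 1).
Proof.
have oppE := oppr_pchar2 char2_of_card.
have factor : (y + z) * (y + z + 1) = artin_schreier y - artin_schreier z.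
  have -> : (y + z) * (y + z + 1) = artin_schreier y + artin_schreier z + (y * z) *+ 2.
    by rewrite /artin_schreier; ring.
  by rewrite (mulrn_pchar char2_of_card) addr0 oppE.
by rewrite -subr_eq0 -factor mulf_eq0 addr_eq0 oppE -addrA addr_eq0 oppE.
Qed.

Lemma neq_add1 (y : F) : y != y + 1.
Proof. by rewrite -subr_eq0 opprD addNKr oppr_eq0 oner_eq0. Qed.

Lemma card_artin_schreier_fibre y :
  #|[set z | artin_schreier z == artin_schreier y]| = 2%N.
Proof.
have -> : [set z | artin_schreier z == artin_schreier y] = [set y; y + 1].
  by apply/setP => z; rewrite !inE artin_schreier_eq.
by rewrite cards2 neq_add1.
Qed.

(* The image of the 2-to-1 map [artin_schreier] has [q/2] elements and lies in
   the kernel of the trace, which has at most [q/2] elements. *)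
Lemma artin_schreier_onto c :
  abs_trace r c = 0 -> exists y, artin_schreier y = c.
Proof.
pose Im := [set artin_schreier y | y : F].
have Im_sub : Im \subset [set c | abs_trace r c == 0].
  by apply/subsetP => _ /imsetP[y _ ->]; rewrite inE abs_trace_artin_schreier.
have card_Im : (#|Im| * 2 = #|F|)%N.
  rewrite -[RHS]sum1_card (partition_big artin_schreier (mem Im)); last by move=> y _; apply: imset_f.
  rewrite -sum_nat_const; apply: eq_bigr => _ /imsetP[y _ ->].
  by rewrite sum1dep_card card_artin_schreier_fibre.
have : Im == [set c | abs_trace r c == 0].
  rewrite eqEcard Im_sub /=; apply: leq_trans card_abs_trace_ker_le _.
  move: card_Im; rewrite cardF; case: r exponent_gt0 => // r' _ /=.
  by rewrite expnSr => /eqP; rewrite eqn_pmul2r // => /eqP ->.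
move=> /eqP Im_ker tr_c; have : c \in Im by rewrite Im_ker inE tr_c.
by case/imsetP => y _ ->; exists y.
Qed.

Lemma card_artin_schreier_preimage c :
  #|[set y | artin_schreier y == c]| = if abs_trace r c == 0 then 2%N else 0%N.
Proof.
case: ifPn => [/eqP /artin_schreier_onto [y <-] | tr_c]; first exact: card_artin_schreier_fibre.
apply/eqP; rewrite cards_eq0; apply/eqP/setP => y; rewrite !inE.
by apply/negP => /eqP AS_y; move: tr_c; rewrite -AS_y abs_trace_artin_schreier eqxx.
Qed.

Lemma card_sqr_eq1 : #|[set a : F | a * (0 - a) == 1]| = 1%N.
Proof.
rewrite -(cards1 (1 : F)); apply: eq_card => a; rewrite !inE.
by rewrite sub0r mulrN (oppr_pchar2 char2_of_card) -expr2 sqrf_eq1 (oppr_pchar2 char2_of_card) orbb.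
Qed.

Lemma card_quadratic_eq1 (t : F) : t != 0 ->
  #|[set a : F | a * (t - a) == 1]| = if abs_trace r t^-1 == 0 then 2%N else 0%N.
Proof.
move=> t_neq0; rewrite -abs_trace_sqr -card_artin_schreier_preimage.
have t2_neq0 : t ^+ 2 != 0 by rewrite expf_neq0.
have scaled_eq y : (t * y * (t - t * y) == 1) = (artin_schreier y == t^-1 ^+ 2).
  have -> : t * y * (t - t * y) = t ^+ 2 * artin_schreier y.
    by rewrite /artin_schreier -[in RHS](oppr_pchar2 char2_of_card (y ^+ 2)); ring.
  by rewrite exprVn -[X in _ == X](mulfV t2_neq0) (inj_eq (mulfI t2_neq0)).
rewrite -[RHS](card_imset _ (mulfI t_neq0)); apply: eq_card => a; rewrite inE.
apply/idP/imsetP => [a_eq | [y]].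
  by exists (t^-1 * a); rewrite ?inE -?(scaled_eq (t^-1 * a)) mulVKf.
by move=> + ->; rewrite inE -scaled_eq.
Qed.

Lemma card_SL2_trace_char2 (t : F) :
  #|[set g : SL2 F | \tr (val g) == t]| =
  if t == 0 then (#|F| ^ 2)%N
  else if abs_trace r t^-1 == 0 then (#|F| ^ 2 + #|F|)%N else (#|F| ^ 2 - #|F|)%N.
Proof.
have q_gt0 : (0 < #|F|)%N by rewrite cardF expn_gt0.
rewrite card_SL2_trace; case: ifPn => [/eqP -> | t_neq0].
  by rewrite card_sqr_eq1 -subn1; nia.
by rewrite card_quadratic_eq1 //; case: ifP => _; rewrite -subn1; nia.
Qed.

Lemma prod_binomial_SL2_trace_classes (nu : F -> nat) :
  (\prod_b 'C(#|[set g : SL2 F | \tr (val g) == b]|, nu b) =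
   'C(#|F| ^ 2, nu 0%R) *
   (\prod_(b | (b != 0%R) && (abs_trace r b^-1 == 0%R)) 'C(#|F| ^ 2 + #|F|, nu b)) *
   (\prod_(b | (b != 0%R) && (abs_trace r b^-1 == 1%R)) 'C(#|F| ^ 2 - #|F|, nu b)))%N.
Proof.
rewrite (bigD1 0) //= card_SL2_trace_char2 eqxx -mulnA; congr (_ * _)%N.
rewrite (bigID (fun b => abs_trace r b^-1 == 0)) /=; congr (_ * _)%N; apply: eq_big.
- by [].
- by move=> b /andP[/negbTE b_neq0 tr_b]; rewrite card_SL2_trace_char2 b_neq0 tr_b.
- move=> b; congr (_ && _); have /orP[] := abs_trace01 b^-1 => /eqP ->.
    by rewrite eqxx eq_sym oner_eq0.
  by rewrite oner_eq0 eqxx.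
- by move=> b /andP[/negbTE b_neq0 /negbTE tr_b]; rewrite card_SL2_trace_char2 b_neq0 tr_b.
Qed.

End AbsoluteTrace.

Definition admissible_profile (F : finFieldType) (i : nat) (nu : F -> nat) : bool :=
  ((\sum_b nu b)%N == i) && (\sum_b b *+ nu b == 0).

Lemma admissible_profile_sum (F : finFieldType) (i : nat) (nu : F -> nat) :
  admissible_profile i nu -> (\sum_b nu b)%N = i.
Proof. by case/andP=> /eqP. Qed.

Lemma admissible_profile_ext (F : finFieldType) (i : nat) (nu1 nu2 : F -> nat) :
  nu1 =1 nu2 -> admissible_profile i nu1 = admissible_profile i nu2.
Proof.
move=> nu12; rewrite /admissible_profile (eq_bigr _ (fun b _ => nu12 b)).
by rewrite [X in _ && (X == _)](eq_bigr _ (fun b _ => congr1 _ (nu12 b))).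
Qed.

Lemma weight_count_fibre_counts (F : finFieldType) (i : nat) :
  weight_count F i =
  #|[set u | admissible_profile i (fibre_count (fun g : SL2 F => \tr (val g)) u)]|.
Proof.
apply: eq_card => u; rewrite !inE /admissible_profile /hweight andbC.
congr (_ && _).
  rewrite -sum1dep_card (partition_big (fun g : SL2 F => \tr (val g)) xpredT) //.
  by congr (_ == _); apply: eq_bigr => b _; rewrite sum1dep_card.
congr (_ == _).
rewrite (eq_bigr (fun g => if u g then \tr (val g) else 0)); last first.
  by move=> g _; case: (u g); rewrite ?mul1r ?mul0r.
rewrite -big_mkcond (partition_big (fun g : SL2 F => \tr (val g)) xpredT) //=.
apply: eq_bigr => b _; rewrite (eq_bigr (fun _ => b)); last by move=> g /andP[_ /eqP].
by rewrite /fibre_count -sumr_const; apply: eq_bigl => g; rewrite inE.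
Qed.

Theorem corollary18 (F : finFieldType) (r : nat) (hr : (0 < r)%N)
  (hF : #|F| = (2 ^ r)%N) (i : nat)
  (hi : (i <= #|F| * (#|F| ^ 2 - 1))%N) :
  weight_count F i =
  (\sum_(nu : {ffun F -> 'I_i.+1} |
          ((\sum_(b : F) (nu b : nat))%N == i) &&
          (\sum_(b : F) b *+ nu b == 0 :> F)%R)
     'C(#|F| ^ 2, nu 0%R) *
     (\prod_(b : F | (b != 0 :> F)%R && (abs_trace r b^-1 == 0 :> F)%R) 'C(#|F| ^ 2 + #|F|, nu b)) *
     (\prod_(b : F | (b != 0 :> F)%R && (abs_trace r b^-1 == 1 :> F)%R) 'C(#|F| ^ 2 - #|F|, nu b)))%N.
Proof.
rewrite weight_count_fibre_counts.
rewrite (card_words_by_fibre_counts _ (@admissible_profile_sum F i) (@admissible_profile_ext F i)).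
by apply: eq_bigr => nu _; rewrite (prod_binomial_SL2_trace_classes hF).
Qed.
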